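(* Given any Boolean multi-function $f$, there are Boolean functions $g_0$ and $g_1$ such that $f=\diamond(g_0,g_1)$.
   Context: Let $\mathbf{2}=\{0,1\}$. An $n$-ary Boolean multi-function is a map $f:\mathbf{2}^n\to \wp(\mathbf{2})\setminus \emptyset=\{\{0\},\{1\},\{0,1\}\}$; a Boolean function is the special case where every output is a singleton. The platypus connective, written here $\diamond$, is the binary Boolean multi-function $\diamond(x,y)=\{x\land y,x\lor y\}$. Composition of multi-functions is taken in either of the following senses (which coincide when the inner maps are functions): $f(g_1(\vec{x}_1),\ldots,g_n(\vec{x}_n))=\bigcup\{f(\vec{y}):\vec{y}\in \prod_{1\leq i\leq n}g_i(\vec{x}_i)\}$, or the same union restricted to $\vec y$ with $y_i=y_j$ whenever $g_i(\vec{x}_i)=g_j(\vec{x}_j)$. *)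

From mathcomp Require Import all_boot.
Set Implicit Arguments. Unset Strict Implicit. Unset Printing Implicit Defensive.

(* Boolean n-ary multi-function: 2^n -> P(2) \ {emptyset}.
   Inputs are n-tuples of booleans; outputs are finite sets of booleans,
   the nonemptiness being a separate hypothesis. *)
Definition is_multifun (n : nat) (f : n.-tuple bool -> {set bool}) : Prop :=
  forall x, f x != set0.

Definition platypus (x y : bool) : {set bool} := [set x && y; x || y].

Definition fun_as_multi (n : nat) (g : n.-tuple bool -> bool)
  : n.-tuple bool -> {set bool} := fun x => [set g x].

Definition mcomp2 (n : nat) (h : bool -> bool -> {set bool})
  (G0 G1 : n.-tuple bool -> {set bool}) : n.-tuple bool -> {set bool} :=
  fun x => \bigcup_(y0 in G0 x) \bigcup_(y1 in G1 x) h y0 y1.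

From mathcomp Require Import all_boot.
From Stdlib Require Import FunctionalExtensionality.

(* Every nonempty subset of 2 is a value of the platypus connective:
   {0} = 0 ⋄ 0, {1} = 1 ⋄ 1 and {0,1} = 0 ⋄ 1.  Choosing such arguments
   pointwise gives g0 and g1. *)

Lemma platypus_of_nonempty (S : {set bool}) :
  S != set0 -> S = platypus (false \notin S) (true \in S).
Proof.
case: (set_0Vmem S) => [-> | [y yS] _]; first by rewrite eqxx.
apply/setP => b; rewrite !inE.
by case: b; case: y yS; case: (false \in S); case: (true \in S).
Qed.

Lemma mcomp2_fun_as_multi (n : nat) (h : bool -> bool -> {set bool})
    (g0 g1 : n.-tuple bool -> bool) (x : n.-tuple bool) :
  mcomp2 h (fun_as_multi g0) (fun_as_multi g1) x = h (g0 x) (g1 x).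
Proof. by rewrite /mcomp2 /fun_as_multi !big_set1. Qed.

Theorem proposition1 (n : nat) (f : n.-tuple bool -> {set bool}) :
  is_multifun f ->
  exists g0 g1 : n.-tuple bool -> bool,
    f = mcomp2 platypus (fun_as_multi g0) (fun_as_multi g1).
Proof.
move=> f_nonempty; exists (fun x => false \notin f x), (fun x => true \in f x).
apply: functional_extensionality => x.
by rewrite mcomp2_fun_as_multi; apply: platypus_of_nonempty.
Qed.
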